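(* Let $F$ be a non-archimedean local field of characteristic not $2$ with valuation ring $\mathfrak{o}$, $V$ a $2$-dimensional $F$-vector space, and $\ddagger$ an orthogonal involution on $End(V)$ with associated bilinear form $b_\ddagger$. For a lattice $\Lambda\subset V$, the order $End(\Lambda)\cap End(\Lambda^\sharp)$ depends only on $\Lambda$ up to scaling by $F^\times$, so that $$[\Lambda]\mapsto End(\Lambda)\cap End(\Lambda^\sharp)$$ is a well-defined map from lattices in $V$ up to scaling to orders of $End(V)$; its image is exactly the set of orders of the form $\mathcal{O}\cap\mathcal{O}^\ddagger$ with $\mathcal{O}$ a maximal order of $End(V)$.
   Context: $b_\ddagger$ is a nondegenerate symmetric bilinear form on $V$ (unique up to $F^\times$-scaling) with $b_\ddagger(v,\sigma w)=b_\ddagger(\sigma^\ddagger v,w)$ for all $v,w\in V,\sigma\in End(V)$. A lattice in $V$ is a finitely generated $\mathfrak{o}$-submodule spanning $V$. $\Lambda^\sharp=\{v\in V: b_\ddagger(v,\Lambda)\subset\mathfrak{o}\}$ and $End(\Lambda)=\{\sigma\in End(V):\sigma(\Lambda)\subset\Lambda\}$. An order is an $\mathfrak{o}$-lattice in $End(V)$ which is a subring with $1$ spanning $End(V)$; $\mathcal{O}^\ddagger=\{x^\ddagger : x\in\mathcal{O}\}$. *)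

From HB Require Import structures.
From mathcomp Require Import all_boot all_order all_algebra.
Set Implicit Arguments. Unset Strict Implicit. Unset Printing Implicit Defensive.
Import Order.TTheory GRing.Theory Num.Theory.
Local Open Scope ring_scope.

Section Defs.
Variables (F : fieldType) (v : F -> int).

(* valuation ring o and the ideals p^k (v 0 is irrelevant: 0 is put in by hand) *)
Definition inO (x : F) : Prop := x = 0 \/ (0 <= v x)%R.
Definition inP (k : int) (x : F) : Prop := x = 0 \/ (k <= v x)%R.

Record nonarch_local_field : Prop := {
  v_mul : forall x y, x != 0 -> y != 0 -> v (x * y) = v x + v y;
  v_add : forall x y, x != 0 -> y != 0 -> x + y != 0 ->
            (Num.min (v x) (v y) <= v (x + y))%R;
  v_surj : forall n : int, exists x, x != 0 /\ v x = n;
  residue_finite : exists s : seq F, forall x, inO x ->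
            exists2 y, y \in s & (inO y /\ inP 1 (x - y));
  complete : forall u : nat -> F,
      (forall k : int, exists N, forall m n, (N <= m)%N -> (N <= n)%N -> inP k (u m - u n)) ->
      exists l, forall k : int, exists N, forall n, (N <= n)%N -> inP k (u n - l)
}.

Definition seteq (T : Type) (A B : T -> Prop) := forall x, A x <-> B x.

Definition olattice (M : lmodType F) (L : M -> Prop) : Prop :=
  exists s : seq M,
    (forall x, L x <-> exists c : 'I_(size s) -> F,
                 (forall i, inO (c i)) /\ x = \sum_(i < size s) c i *: s`_i) /\
    (forall x : M, exists c : 'I_(size s) -> F, x = \sum_(i < size s) c i *: s`_i).

(* V = F^2 as column vectors, End(V) = 2x2 matrices acting on the left *)
Definition bform (B : 'M[F]_2) (x y : 'cV[F]_2) : F := (x^T *m B *m y) 0 0.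

Definition dual_lattice (B : 'M[F]_2) (L : 'cV[F]_2 -> Prop) : 'cV[F]_2 -> Prop :=
  fun x => forall w, L w -> inO (bform B x w).

Definition EndL (L : 'cV[F]_2 -> Prop) : 'M[F]_2 -> Prop :=
  fun s => forall x, L x -> L (s *m x).

Definition scale_lattice (c : F) (L : 'cV[F]_2 -> Prop) : 'cV[F]_2 -> Prop :=
  fun x => exists2 y, L y & x = c *: y.

Definition EndInter (B : 'M[F]_2) (L : 'cV[F]_2 -> Prop) : 'M[F]_2 -> Prop :=
  fun s => EndL L s /\ EndL (dual_lattice B L) s.

Definition is_order (O : 'M[F]_2 -> Prop) : Prop :=
  olattice O /\ O 1 /\ (forall x y, O x -> O y -> O (x * y)).

Definition max_order (O : 'M[F]_2 -> Prop) : Prop :=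
  is_order O /\ forall O', is_order O' -> (forall x, O x -> O' x) -> forall x, O' x -> O x.

Definition dagger_set (ddag : 'M[F]_2 -> 'M[F]_2) (O : 'M[F]_2 -> Prop) : 'M[F]_2 -> Prop :=
  fun x => exists2 y, O y & x = ddag y.

End Defs.

(* An o-lattice L of F^2 has a basis P: take an element of L whose first coordinate has
   minimal valuation and an element with first coordinate 0 whose second coordinate has
   minimal valuation.  Then End(L) = P M_2(o) P^-1, and for symmetric B the dual lattice
   L^# has basis (P^T B)^-1.  Since s^‡ = B^-1 s^T B, the matrix P^-1 s^‡ P is the
   transpose of s conjugated by (P^T B)^-1, so ‡ maps End(L) onto End(L^#) and
   End(L) ∩ End(L^#) = O ∩ O^‡ with O = End(L).  The orders End(L) are exactly the maximal
   orders: an order O stabilises the lattice {x | O x ⊆ o^2}, and an order containing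
   M_2(o) has integral entries, since otherwise s_ij e_ii = e_ii s e_ji would have powers
   of unbounded valuation.  Scaling L by c scales L^# by c^-1 and fixes both endomorphism
   rings. *)

From HB Require Import structures.
From mathcomp Require Import all_boot all_order all_algebra.
From mathcomp Require Import zify.
From Stdlib Require Import Classical FunctionalExtensionality PropExtensionality.
Import Order.TTheory GRing.Theory Num.Theory.
Local Open Scope ring_scope.
Set Implicit Arguments. Unset Strict Implicit. Unset Printing Implicit Defensive.

Lemma seteqP (T : Type) (A B : T -> Prop) : seteq A B -> A = B.
Proof.
by move=> AB; apply: functional_extensionality => x; apply: propositional_extensionality.
Qed.

Lemma nat_ex_min (Q : nat -> Prop) :
  (exists n, Q n) -> exists m, Q m /\ forall n, Q n -> (m <= n)%N.
Proof.
move=> [n Qn]; apply: NNPP => nomin.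
suff noQ N m : (m < N)%N -> ~ Q m by exact: noQ n.+1 n (ltnSn n) Qn.
elim: N m => [//|N IH] m; rewrite ltnS => le_mN Qm; apply: nomin.
exists m; split => // k Qk; rewrite leqNgt; apply/negP => lt_km.
exact: IH k (leq_trans lt_km le_mN) Qk.
Qed.

Section Valuation.
Variables (F : fieldType) (v : F -> int).
Hypothesis hF : nonarch_local_field v.

Lemma val1 : v 1 = 0.
Proof.
have e : v 1 = v 1 + v 1 by have := v_mul hF (oner_neq0 F) (oner_neq0 F); rewrite mulr1.
lia.
Qed.

Lemma valV x : x != 0 -> v x^-1 = - v x.
Proof.
move=> nx; have e : 0 = v x + v x^-1.
  by rewrite -val1 -(mulfV nx); exact: (v_mul hF nx (invr_neq0 nx)).
lia.
Qed.

Lemma valN x : x != 0 -> v (- x) = v x.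
Proof.
have nN1 : (-1 : F) != 0 by rewrite oppr_eq0 oner_neq0.
have vN1 : v (-1) = 0.
  have e : 0 = v (-1) + v (-1) by rewrite -val1 -(v_mul hF nN1 nN1) mulrNN mulr1.
  lia.
by move=> nx; rewrite -mulN1r (v_mul hF nN1 nx) vN1 add0r.
Qed.

Lemma valX x m : x != 0 -> v (x ^+ m) = v x * m%:Z.
Proof.
move=> nx; elim: m => [|m IH]; first by rewrite expr0 val1 mulr0.
rewrite exprS (v_mul hF nx (expf_neq0 m nx)) IH; lia.
Qed.

Lemma inP0 k : inP v k 0. Proof. by left. Qed.

Lemma inP1 : inP v 0 1. Proof. by right; rewrite val1. Qed.

Lemma inP_val x : inP v (v x) x. Proof. by right. Qed.

Lemma inP_val_le k x : x != 0 -> inP v k x -> k <= v x.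
Proof. by move=> nx [x0|//]; rewrite x0 eqxx in nx. Qed.

Lemma inP_le a b x : a <= b -> inP v b x -> inP v a x.
Proof. by move=> le_ab [->|h]; [left | right; exact: le_trans h]. Qed.

Lemma inPD k x y : inP v k x -> inP v k y -> inP v k (x + y).
Proof.
have [-> _|nx] := eqVneq x 0; first by rewrite add0r.
have [-> hx _|ny] := eqVneq y 0; first by rewrite addr0.
have [-> _ _|nxy] := eqVneq (x + y) 0; first exact: inP0.
move=> /(inP_val_le nx) hx /(inP_val_le ny) hy; right.
by apply: le_trans (v_add hF nx ny nxy); rewrite le_min hx hy.
Qed.

Lemma inPN k x : inP v k x -> inP v k (- x).
Proof.
have [-> _|nx] := eqVneq x 0; first by rewrite oppr0; exact: inP0.
by move=> /(inP_val_le nx) hx; right; rewrite valN.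
Qed.

Lemma inPM a b x y : inP v a x -> inP v b y -> inP v (a + b) (x * y).
Proof.
have [-> _ _|nx] := eqVneq x 0; first by rewrite mul0r; exact: inP0.
have [-> _ _|ny] := eqVneq y 0; first by rewrite mulr0; exact: inP0.
move=> /(inP_val_le nx) hx /(inP_val_le ny) hy; right.
by rewrite (v_mul hF nx ny); exact: lerD.
Qed.

Lemma inP_sum k (I : Type) (r : seq I) (P : pred I) (G : I -> F) :
  (forall i, P i -> inP v k (G i)) -> inP v k (\sum_(i <- r | P i) G i).
Proof. by move=> h; apply: big_ind => //; [exact: inP0 | exact: inPD]. Qed.

Lemma inP_divr x y : x != 0 -> inP v (v x) y -> inP v 0 (y / x).
Proof. by move=> nx /inPM/(_ (inP_val x^-1)); rewrite valV // subrr. Qed.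

Lemma inP_bound (I : finType) (G : I -> F) : exists k, forall i, inP v k (G i).
Proof.
suff [k hk] : exists k, forall x, x \in [seq G i | i <- enum I] -> inP v k x.
  by exists k => i; apply/hk/map_f; rewrite mem_enum.
elim: [seq _ | _ <- _] => [|y s [k hk]]; first by exists 0.
exists (Num.min k (v y)) => x; rewrite inE => /orP[/eqP-> | /hk].
  by apply: inP_le (inP_val y); rewrite ge_min lexx orbT.
by apply: inP_le; rewrite ge_min lexx.
Qed.

Lemma inO_of_bounded_expS k x : (forall m, inP v k (x ^+ m.+1)) -> inP v 0 x.
Proof.
have [-> _|nx hx] := eqVneq x 0; first exact: inP0.
right; have := inP_val_le (expf_neq0 _ nx) (hx `|k|%N); rewrite valX //; nia.
Qed.

Lemma ex_min_val (S : F -> Prop) k :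
  (forall x, S x -> inP v k x) -> (exists2 x, S x & x != 0) ->
  exists x0, [/\ S x0, x0 != 0 & forall x, S x -> inP v (v x0) x].
Proof.
move=> bnd [x Sx nx].
pose Q n := exists2 y, S y /\ y != 0 & v y = k + n%:Z.
have Qx : Q `|v x - k|%N.
  by exists x => //; have := inP_val_le nx (bnd x Sx); lia.
have [m [[y [Sy ny] vy] minQ]] := nat_ex_min (ex_intro _ _ Qx).
exists y; split => // z Sz; have [->|nz] := eqVneq z 0; first exact: inP0.
have kz := inP_val_le nz (bnd z Sz).
have /minQ : Q `|v z - k|%N by exists z => //; lia.
by right; lia.
Qed.

End Valuation.

Section Lattices.
Variables (F : fieldType) (v : F -> int).
Hypothesis hF : nonarch_local_field v.

Definition inPmx k m n (A : 'M[F]_(m, n)) := forall i j, inP v k (A i j).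

Lemma inPmx_bound m n (A : 'M[F]_(m, n)) : exists k, inPmx k A.
Proof.
have [k hk] := inP_bound v (fun ij : 'I_m * 'I_n => A ij.1 ij.2).
by exists k => i j; exact: hk (i, j).
Qed.

Lemma inPmx_le a b m n (A : 'M[F]_(m, n)) : a <= b -> inPmx b A -> inPmx a A.
Proof. by move=> le_ab hA i j; exact: inP_le le_ab (hA i j). Qed.

Lemma inPmx0 k m n : inPmx k (0 : 'M[F]_(m, n)).
Proof. by move=> i j; rewrite mxE; exact: inP0. Qed.

Lemma inPmxD k m n (A B : 'M[F]_(m, n)) : inPmx k A -> inPmx k B -> inPmx k (A + B).
Proof. by move=> hA hB i j; rewrite mxE; exact: (inPD hF). Qed.

Lemma inPmxZ a b c m n (A : 'M[F]_(m, n)) : inP v a c -> inPmx b A -> inPmx (a + b) (c *: A).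
Proof. by move=> hc hA i j; rewrite mxE; exact: (inPM hF). Qed.

Lemma inPmxM a b m n p (A : 'M[F]_(m, n)) (B : 'M[F]_(n, p)) :
  inPmx a A -> inPmx b B -> inPmx (a + b) (A *m B).
Proof. by move=> hA hB i j; rewrite mxE; apply: (inP_sum hF) => k _; exact: (inPM hF). Qed.

Lemma inPmxM0 m n p (A : 'M[F]_(m, n)) (B : 'M[F]_(n, p)) :
  inPmx 0 A -> inPmx 0 B -> inPmx 0 (A *m B).
Proof. by move=> hA /(inPmxM hA); rewrite addr0. Qed.

Lemma inPmx_delta m n (i : 'I_m) (j : 'I_n) : inPmx 0 (delta_mx i j : 'M[F]_(m, n)).
Proof. by move=> a b; rewrite mxE; case: (_ && _); [exact: inP1 | exact: inP0]. Qed.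

Lemma inPmx1 n : inPmx 0 (1%:M : 'M[F]_n).
Proof. by move=> i j; rewrite mxE; case: (i == j); [exact: inP1 | exact: inP0]. Qed.

Lemma inPmx_tr k m n (A : 'M[F]_(m, n)) : inPmx k A^T <-> inPmx k A.
Proof. by split => hA i j; have := hA j i; rewrite mxE. Qed.

Lemma inPmx_sandwich m n p q (X : 'M[F]_(m, n)) (Y : 'M[F]_(p, q)) :
  exists k0, forall k (A : 'M[F]_(n, p)), inPmx k A -> inPmx (k + k0) (X *m A *m Y).
Proof.
have [[kX hX] [kY hY]] := (inPmx_bound X, inPmx_bound Y).
exists (kX + kY) => k A hA; apply: inPmx_le (inPmxM (inPmxM hX hA) hY).
by rewrite addrA (addrC k).
Qed.

Definition omodule (M : lmodType F) (S : M -> Prop) :=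
  [/\ S 0, forall x y, S x -> S y -> S (x + y) & forall a x, inO v a -> S x -> S (a *: x)].

Definition absorbing (M : lmodType F) (S : M -> Prop) :=
  forall x, exists k, forall a, inP v k a -> S (a *: x).

Definition ospan (M : lmodType F) (s : seq M) (x : M) :=
  exists c : 'I_(size s) -> F, (forall i, inO v (c i)) /\ x = \sum_(i < size s) c i *: s`_i.

Lemma absorbing_nz (M : lmodType F) (S : M -> Prop) x :
  absorbing S -> exists2 a, a != 0 & S (a *: x).
Proof.
move=> /(_ x) [k Sk]; have [a [na va]] := v_surj hF k.
by exists a => //; apply: Sk; rewrite -va; exact: inP_val.
Qed.

Lemma omodule_sum (M : lmodType F) (S : M -> Prop) (I : Type) (r : seq I) (P : pred I)
    (G : I -> M) :
  omodule S -> (forall i, P i -> S (G i)) -> S (\sum_(i <- r | P i) G i).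
Proof. by case=> S0 SD _ SG; apply: big_ind. Qed.

Lemma omodule_ospan (M : lmodType F) (s : seq M) : omodule (ospan s).
Proof.
split.
- exists (fun _ => 0); split => [i|]; first exact: inP0.
  by rewrite big1 // => i _; rewrite scale0r.
- move=> x y [c [hc ->]] [d [hd ->]]; exists (fun i => c i + d i); split.
    by move=> i; exact: (inPD hF (hc i) (hd i)).
  by rewrite -big_split; apply: eq_bigr => i _; rewrite scalerDl.
- move=> a x ha [c [hc ->]]; exists (fun i => a * c i); split.
    by move=> i; have := inPM hF ha (hc i); rewrite addr0.
  by rewrite scaler_sumr; apply: eq_bigr => i _; rewrite scalerA.
Qed.

Lemma ospan_cons (M : lmodType F) (x0 : M) (t : seq M) y :
  ospan (x0 :: t) y <-> exists2 a, inO v a & ospan t (y - a *: x0).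
Proof.
split => [[c [hc ->]] | [a ha [c [hc ey]]]].
  exists (c ord0) => //; exists (fun i => c (lift ord0 i)); split => //.
  by rewrite big_ord_recl addrAC subrr add0r.
exists (fun i : 'I_(size t).+1 => if unlift ord0 i is Some j then c j else a); split.
  by move=> i; case: (unlift ord0 i).
rewrite big_ord_recl unlift_none -[y](subrK (a *: x0)) ey addrC; congr (_ + _).
by apply: eq_bigr => i _; rewrite liftK.
Qed.

(* Induction on the coordinates at which elements of S may be nonzero: an element of S
   whose p-coordinate has minimal valuation, together with generators of the elements of S
   vanishing at p, generates S. *)
Lemma bounded_omodule_ospan m n (r : seq ('I_m * 'I_n)) (S : 'M[F]_(m, n) -> Prop) k :
  omodule S -> (forall x, S x -> inPmx k x) ->
  (forall x p, S x -> p \notin r -> x p.1 p.2 = 0) -> exists s, S = ospan s.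
Proof.
elim: r S => [|p r IH] S [S0 SD SZ] Sk Sr.
  exists [::]; apply: seteqP => x; split => [Sx|[c [_ ->]]]; last by rewrite big_ord0.
  have -> : x = 0 by apply/matrixP => i j; rewrite mxE (Sr x (i, j)).
  by exists (fun _ => 0); split => [i|]; [exact: inP0 | rewrite big_ord0].
pose S' x := S x /\ x p.1 p.2 = 0.
have [t S't] : exists t, S' = ospan t.
  apply: IH => [| x [Sx _] | x q [Sx xp] qr]; last 2 first.
  - exact: Sk.
  - by have [->|nqp] := eqVneq q p; last by apply: Sr; rewrite // inE negb_or nqp.
  split => [|x y [Sx xp] [Sy yp]|a x a_o [Sx xp]]; split; rewrite ?mxE ?xp ?yp ?mulr0 ?addr0 //.
  + exact: SD.
  + exact: SZ.
have [S_p|] := classic (exists2 x, S x & x p.1 p.2 != 0); last first.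
  move=> no_p; exists t; rewrite -S't; apply: seteqP => x; split => [Sx|[]//].
  by split => //; apply/eqP/contraT => nx; case: no_p; exists x.
pose Sp a := exists2 x, S x & x p.1 p.2 = a.
have [_ [[x0 Sx0 <-] nx0 min_x0]] :
    exists a0, [/\ Sp a0, a0 != 0 & forall a, Sp a -> inP v (v a0) a].
  apply: (ex_min_val (k := k)) => [_ [x Sx <-]|]; first exact: Sk.
  by case: S_p => x Sx nx; exists (x p.1 p.2) => //; exists x.
exists (x0 :: t); apply: seteqP => x; rewrite ospan_cons -S't; split.
- move=> Sx; have a_o : inO v (x p.1 p.2 / x0 p.1 p.2).
    by apply: (inP_divr hF) nx0 _; apply: min_x0; exists x.
  exists (x p.1 p.2 / x0 p.1 p.2) => //; split.
    by rewrite -scaleNr; apply: SD Sx (SZ _ _ (inPN hF a_o) Sx0).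
  by rewrite !mxE divfK // subrr.
- case=> a a_o [Sx' _]; rewrite -[x](subrK (a *: x0)); exact: SD Sx' (SZ _ _ a_o Sx0).
Qed.

Lemma olatticeP m n (S : 'M[F]_(m, n) -> Prop) :
  olattice v S <-> [/\ omodule S, exists k, forall x, S x -> inPmx k x & absorbing S].
Proof.
split => [[s [/seteqP -> span]] | [Som [k Sk] Sabs]].
  split; first exact: omodule_ospan.
    have [k hk] := inP_bound v (fun q : 'I_(size s) * ('I_m * 'I_n) => s`_q.1 q.2.1 q.2.2).
    exists k => x [c [hc ->]] i j; rewrite summxE; apply: (inP_sum hF) => l _.
    by rewrite mxE -[k]add0r; exact: (inPM hF (hc l) (hk (l, (i, j)))).
  move=> x; have [c ->] := span x; have [k hk] := inP_bound v c.
  exists (- k) => a ha; exists (fun i => a * c i); split.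
    by move=> i; have := inPM hF ha (hk i); rewrite addNr.
  by rewrite scaler_sumr; apply: eq_bigr => i _; rewrite scalerA.
have [s Ss] : exists s, S = ospan s.
  by apply: (bounded_omodule_ospan (r := enum predT) Som Sk) => x p _; rewrite mem_enum.
exists s; split => [x|x]; first by rewrite Ss.
have [a na] := absorbing_nz x Sabs; rewrite Ss => -[c [_ e]].
exists (fun i => a^-1 * c i); rewrite -[x](scalerK na) e scaler_sumr.
by apply: eq_bigr => i _; rewrite scalerA.
Qed.

Lemma olatticeI m n (S T : 'M[F]_(m, n) -> Prop) :
  olattice v S -> olattice v T -> olattice v (fun x => S x /\ T x).
Proof.
move=> /olatticeP[[S0 SD SZ] [k Sk] Sabs] /olatticeP[[T0 TD TZ] _ Tabs].
apply/olatticeP; split.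
- split => // [x y [Sx Tx] [Sy Ty] | a x a_o [Sx Tx]]; split; auto.
- by exists k => x [/Sk].
- move=> x; have [[k1 hk1] [k2 hk2]] := (Sabs x, Tabs x).
  exists (Num.max k1 k2) => a ha.
  by split; [apply: hk1 | apply: hk2]; apply: inP_le ha; rewrite le_max lexx ?orbT.
Qed.

Lemma is_orderI (O1 O2 : 'M[F]_2 -> Prop) :
  is_order v O1 -> is_order v O2 -> is_order v (fun x => O1 x /\ O2 x).
Proof.
move=> [O1lat [O1_1 O1M]] [O2lat [O2_1 O2M]]; split; first exact: olatticeI.
by split => // x y [? ?] [? ?]; split; [apply: O1M | apply: O2M].
Qed.

End Lattices.

Section Orders.
Variables (F : fieldType) (v : F -> int).
Hypothesis hF : nonarch_local_field v.

Lemma delta_mulmx_delta n (A : 'M[F]_n) i j :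
  delta_mx i i *m A *m delta_mx j i = A i j *: delta_mx i i.
Proof.
apply/matrixP => a b; rewrite !mxE (bigD1 j) //= big1 => [|c ncj]; last first.
  by rewrite [delta_mx j i c b]mxE (negbTE ncj) mulr0.
rewrite [delta_mx j i j b]mxE eqxx addr0 mxE (bigD1 i) //= big1 => [|d ndi]; last first.
  by rewrite mxE (negbTE ndi) andbF mul0r.
rewrite mxE eqxx addr0 andbT.
by case: (a == i); case: (b == i); rewrite ?mulr1 ?mul1r ?mulr0 ?mul0r.
Qed.

Lemma integral_mx_maximal n (R : 'M[F]_n -> Prop) k :
  (forall s, R s -> inPmx v k s) -> (forall s t, R s -> R t -> R (s *m t)) ->
  (forall s, inPmx v 0 s -> R s) -> forall s, R s -> inPmx v 0 s.
Proof.
move=> Rk RM Rint s Rs i j.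
have Rsij : R (s i j *: delta_mx i i).
  rewrite -delta_mulmx_delta.
  by apply: RM (RM _ _ (Rint _ (inPmx_delta hF _ _)) Rs) (Rint _ (inPmx_delta hF _ _)).
have powR m : R (s i j ^+ m.+1 *: delta_mx i i).
  elim: m => [|m IH]; first by rewrite expr1.
  by have := RM _ _ Rsij IH; rewrite -scalemxAl -scalemxAr mul_delta_mx scalerA -exprS.
apply: (inO_of_bounded_expS hF (k := k)) => m.
by have := Rk _ (powR m) i i; rewrite !mxE eqxx mulr1.
Qed.

Lemma olattice_sandwich m n (X : 'M[F]_m) (Y : 'M[F]_n) : X \in unitmx -> Y \in unitmx ->
  olattice v (fun A : 'M[F]_(m, n) => inPmx v 0 (X *m A *m Y)).
Proof.
move=> uX uY; apply/(olatticeP hF); split.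
- split => [|A A' hA hA'|a A ha hA].
  + by rewrite mulmx0 mul0mx; exact: inPmx0.
  + by rewrite mulmxDr mulmxDl; exact: (inPmxD hF).
  + by rewrite -scalemxAr -scalemxAl -[0]addr0; exact: (inPmxZ hF).
- have [k0 hk0] := inPmx_sandwich hF (invmx X) (invmx Y).
  by exists (0 + k0) => A /hk0; rewrite !mulmxA mulVmx // mul1mx mulmxK.
- move=> A; have [k hk] := inPmx_bound v (X *m A *m Y).
  exists (- k) => a ha; rewrite -scalemxAr -scalemxAl -(addNr k); exact: (inPmxZ hF).
Qed.

Lemma invmxM n (X Y : 'M[F]_n) : X \in unitmx -> Y \in unitmx ->
  invmx (X *m Y) = invmx Y *m invmx X.
Proof.
move=> uX uY; have uXY : X *m Y \in unitmx by rewrite unitmx_mul uX uY.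
by rewrite -[RHS](mulKmx uXY) -mulmxA mulKVmx // mulmxV // mulmx1.
Qed.

Definition basis_lattice n (P : 'M[F]_n) (x : 'cV[F]_n) := inPmx v 0 (invmx P *m x).

Definition basis_order n (P : 'M[F]_n) (s : 'M[F]_n) := inPmx v 0 (invmx P *m s *m P).

Lemma basis_lattice_olattice n (P : 'M[F]_n) : P \in unitmx -> olattice v (basis_lattice P).
Proof.
move=> uP; suff -> : basis_lattice P = fun x => inPmx v 0 (invmx P *m x *m 1%:M).
  by apply: olattice_sandwich; rewrite ?unitmx_inv ?unitmx1.
by apply: seteqP => x; rewrite mulmx1.
Qed.

Lemma basis_lattice_sub n (P : 'M[F]_n) (L : 'cV[F]_n -> Prop) :
  P \in unitmx -> omodule v L -> (forall j, L (col j P)) ->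
  forall x, basis_lattice P x -> L x.
Proof.
move=> uP Lom LP x xP; have [_ _ LZ] := Lom.
rewrite -[x](mulKVmx uP) (matrix_sum_delta (invmx P *m x)) mulmx_sumr.
apply: (omodule_sum (v := v)) => // i _; rewrite mulmx_sumr.
apply: (omodule_sum (v := v)) => // j _.
by rewrite ord1 -scalemxAr -colE; exact: LZ (xP i 0) (LP i).
Qed.

Lemma EndL_basis_lattice (P : 'M[F]_2) :
  P \in unitmx -> EndL (basis_lattice P) = basis_order P.
Proof.
move=> uP; apply: seteqP => s; split => [sL i j | sP x xL].
  have /sL : basis_lattice P (P *m delta_mx j 0).
    by rewrite /basis_lattice mulKmx //; exact: inPmx_delta.
  by move=> /(_ i 0); rewrite !mulmxA -colE mxE.
rewrite /basis_lattice (_ : invmx P *m (s *m x) = (invmx P *m s *m P) *m (invmx P *m x)).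
  exact: (inPmxM0 hF).
by rewrite -!mulmxA mulKVmx.
Qed.

Lemma basis_order_is_order (P : 'M[F]_2) : P \in unitmx -> is_order v (basis_order P).
Proof.
move=> uP; split; first by apply: olattice_sandwich; rewrite ?unitmx_inv.
split => [|s t sP tP]; first by rewrite /basis_order mulmx1 mulVmx //; exact: (inPmx1 hF).
rewrite /basis_order (_ : _ *m _ *m P = (invmx P *m s *m P) *m (invmx P *m t *m P)).
  exact: (inPmxM0 hF).
by rewrite -mulmxE !mulmxA mulmxK.
Qed.

Lemma basis_order_max (P : 'M[F]_2) : P \in unitmx -> max_order v (basis_order P).
Proof.
move=> uP; split; first exact: basis_order_is_order.
move=> O [/(olatticeP hF) [_ [k Ok] _] [_ OM]] sub s Os.
have [k0 hk0] := inPmx_sandwich hF (invmx P) P.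
have conjK t : invmx P *m (P *m t *m invmx P) *m P = t.
  by rewrite -!mulmxA mulKmx // mulVmx // mulmx1.
apply: (integral_mx_maximal (R := fun t => O (P *m t *m invmx P)) (k := k + k0)).
- by move=> t /Ok /hk0; rewrite conjK.
- move=> t u Ot Ou; have := OM _ _ Ot Ou.
  by rewrite -mulmxE !mulmxA mulmxKV.
- by move=> t t0; apply: sub; rewrite /basis_order conjK.
- by rewrite !mulmxA mulmxV // mul1mx mulmxK.
Qed.

End Orders.

Section Plane.
Variables (F : fieldType) (v : F -> int).
Hypothesis hF : nonarch_local_field v.

Lemma ord2P (i : 'I_2) : i = 0 \/ i = 1.
Proof. by case: i => [[|[|//]] hi]; [left | right]; apply: val_inj. Qed.

Lemma cV2P (x y : 'cV[F]_2) : x 0 0 = y 0 0 -> x 1 0 = y 1 0 -> x = y.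
Proof. by move=> e0 e1; apply/matrixP => i j; rewrite ord1; case: (ord2P i) => ->. Qed.

Lemma unitmx_trig2 (P : 'M[F]_2) : P 0 1 = 0 -> P 0 0 != 0 -> P 1 1 != 0 -> P \in unitmx.
Proof.
move=> P01 nP00 nP11; have trigP : is_trig_mx P.
  apply/forallP => i; apply/forallP => j; apply/implyP.
  by case: (ord2P i) => ->; case: (ord2P j) => -> //= _; rewrite P01.
rewrite unitmxE (det_trig trigP) !big_ord_recl big_ord0 mulr1 unitfE.
have [-> ->] : (ord0 : 'I_2) = 0 /\ lift ord0 ord0 = 1 :> 'I_2 by split; apply: val_inj.
exact: mulf_neq0.
Qed.

Lemma olattice_basis (L : 'cV[F]_2 -> Prop) :
  olattice v L -> exists2 P, P \in unitmx & L = basis_lattice v P.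
Proof.
move=> /(olatticeP hF) [Lom [k Lk] Labs]; have [_ LD LZ] := Lom.
pose L1 a := exists2 x, L x & x 0 0 = a.
pose L2 a := exists2 x, L x & x 0 0 = 0 /\ x 1 0 = a.
have [_ [[l1 Ll1 <-] nl1 min1]] : exists a0, [/\ L1 a0, a0 != 0 & forall a, L1 a -> inP v (v a0) a].
  apply: (ex_min_val (k := k)) => [_ [x Lx <-]|]; first exact: Lk.
  have [a na La] := absorbing_nz hF (delta_mx 0 0) Labs.
  by exists a => //; exists (a *: delta_mx 0 0); rewrite // !mxE mulr1.
have [_ [[l2 Ll2 [l2_0 <-]] nl2 min2]] :
    exists a0, [/\ L2 a0, a0 != 0 & forall a, L2 a -> inP v (v a0) a].
  apply: (ex_min_val (k := k)) => [_ [x Lx [_ <-]]|]; first exact: Lk.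
  have [a na La] := absorbing_nz hF (delta_mx 1 0) Labs.
  by exists a => //; exists (a *: delta_mx 1 0); rewrite // !mxE ?mulr0 ?mulr1.
pose P : 'M[F]_2 := \matrix_(i, j) (if j == 0 then l1 else l2) i 0.
have colP j : col j P = if j == 0 then l1 else l2.
  by apply/matrixP => i q; rewrite !mxE ord1.
have uP : P \in unitmx by apply: unitmx_trig2; rewrite !mxE.
exists P => //; apply: seteqP => x; split => [Lx | ]; last first.
  by apply: (basis_lattice_sub uP Lom) => j; rewrite colP; case: ifP.
pose a := x 0 0 / l1 0 0.
have a_o : inO v a by apply: (inP_divr hF) nl1 _; apply: min1; exists x.
pose x' := x - a *: l1.
have x'0 : x' 0 0 = 0 by rewrite !mxE divfK // subrr.
have Lx' : L x' by rewrite /x' -scaleNr; apply: LD Lx (LZ _ _ (inPN hF a_o) Ll1).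
pose b := x' 1 0 / l2 1 0.
have b_o : inO v b by apply: (inP_divr hF) nl2 _; apply: min2; exists x'.
have -> : x = P *m (a *: delta_mx 0 0 + b *: delta_mx 1 0).
  rewrite mulmxDr -!scalemxAr -!colE !colP /= -[x](subrK (a *: l1)) addrC; congr (_ + _).
  apply: cV2P; rewrite !mxE; first by rewrite l2_0 mulr0 divfK // subrr.
  by rewrite /b divfK // !mxE.
rewrite /basis_lattice mulKmx // -[0]addr0.
by apply: (inPmxD hF); apply: (inPmxZ hF) => //; exact: (inPmx_delta hF).
Qed.

Lemma order_sub_basis_order (O : 'M[F]_2 -> Prop) :
  is_order v O -> exists2 P, P \in unitmx & forall s, O s -> basis_order v P s.
Proof.
move=> [/(olatticeP hF) [_ [k Ok] _] [O1 OM]].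
pose L (x : 'cV[F]_2) := forall s, O s -> inPmx v 0 (s *m x).
have [P uP LP] : exists2 P, P \in unitmx & L = basis_lattice v P.
  apply: olattice_basis; apply/(olatticeP hF); split.
  - split => [s _ | x y Lx Ly s Os | a x a_o Lx s Os].
    + by rewrite mulmx0; exact: inPmx0.
    + by rewrite mulmxDr; apply: (inPmxD hF); [exact: Lx | exact: Ly].
    + by rewrite -scalemxAr -[0]add0r; apply: (inPmxZ hF) a_o (Lx s Os).
  - by exists 0 => x /(_ 1 O1); rewrite mul1mx.
  - move=> x; have [kx hkx] := inPmx_bound v x.
    exists (- (k + kx)) => a ha s Os; rewrite -scalemxAr -(addNr (k + kx)).
    exact: (inPmxZ hF) ha (inPmxM hF (Ok s Os) hkx).
exists P => // s Os; rewrite -EndL_basis_lattice // -LP => x Lx t Ot.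
by rewrite mulmxA; apply: Lx; exact: OM.
Qed.

Lemma max_order_basis (O : 'M[F]_2 -> Prop) :
  max_order v O -> exists2 P, P \in unitmx & O = basis_order v P.
Proof.
move=> [Oord Omax]; have [P uP OP] := order_sub_basis_order Oord.
exists P => //; apply: seteqP => s; split; first exact: OP.
exact: Omax (basis_order_is_order hF uP) OP s.
Qed.

End Plane.

Section Duality.
Variables (F : fieldType) (v : F -> int).
Hypothesis hF : nonarch_local_field v.
Variable B : 'M[F]_2.
Hypothesis hBsym : B^T = B.

Lemma bform_mulr x (P : 'M[F]_2) z : bform B x (P *m z) = ((P^T *m B *m x)^T *m z) 0 0.
Proof. by rewrite /bform !trmx_mul trmxK hBsym !mulmxA. Qed.

Lemma dual_basis_lattice P : P \in unitmx ->
  dual_lattice v B (basis_lattice v P) = basis_lattice v (invmx (P^T *m B)).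
Proof.
move=> uP; apply: seteqP => x; rewrite /basis_lattice invmxK; split => [xd i j | xP w wL].
  have /xd : basis_lattice v P (P *m delta_mx i 0).
    by rewrite /basis_lattice mulKmx //; exact: inPmx_delta.
  by rewrite bform_mulr -colE !mxE ord1.
rewrite -[w](mulKVmx uP) bform_mulr.
by apply: (inPmxM0 hF _ wL 0 0); apply/inPmx_tr.
Qed.

Lemma bformZl c x y : bform B (c *: x) y = c * bform B x y.
Proof. by rewrite /bform linearZ /= -!scalemxAl mxE. Qed.

Lemma bformZr c x y : bform B x (c *: y) = c * bform B x y.
Proof. by rewrite /bform -scalemxAr mxE. Qed.

Lemma EndL_scale c (L : 'cV[F]_2 -> Prop) : c != 0 -> EndL (scale_lattice c L) = EndL L.
Proof.
move=> nc; apply: seteqP => s; split => [sL x Lx | sL _ [x Lx ->]].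
  have [y Ly] := sL _ (ex_intro2 _ _ x Lx erefl).
  by rewrite -scalemxAr => /(scalerI nc) ->.
by exists (s *m x); [exact: sL | rewrite scalemxAr].
Qed.

Lemma dual_lattice_scale c (L : 'cV[F]_2 -> Prop) : c != 0 ->
  dual_lattice v B (scale_lattice c L) = scale_lattice c^-1 (dual_lattice v B L).
Proof.
move=> nc; apply: seteqP => x; split => [xd | [y yd ->] _ [w Lw ->]].
  exists (c *: x); last by rewrite scalerA mulVf // scale1r.
  by move=> w Lw; rewrite bformZl -bformZr; apply: xd; exists w.
by rewrite bformZl bformZr mulrA mulVf // mul1r; exact: yd.
Qed.

Lemma EndInter_scale c (L : 'cV[F]_2 -> Prop) :
  c != 0 -> EndInter v B (scale_lattice c L) = EndInter v B L.
Proof.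
by move=> nc; rewrite /EndInter EndL_scale // dual_lattice_scale // EndL_scale // invr_eq0.
Qed.

Hypothesis hBnd : B \in unitmx.
Variable ddag : 'M[F]_2 -> 'M[F]_2.
Hypothesis hdag : forall (s : 'M[F]_2) (x y : 'cV[F]_2),
  bform B x (s *m y) = bform B (ddag s *m x) y.

Lemma bform_delta (A : 'M[F]_2) i j : bform A (delta_mx i 0) (delta_mx j 0) = A i j.
Proof. by rewrite /bform trmx_delta -rowE -colE !mxE. Qed.

Lemma ddagE s : ddag s = invmx B *m s^T *m B.
Proof.
have e1 : B *m s = (ddag s)^T *m B.
  apply/matrixP => i j; rewrite -bform_delta -[RHS]bform_delta.
  by have := hdag s (delta_mx i 0) (delta_mx j 0); rewrite /bform !mulmxA trmx_mul.
have e2 : B *m ddag s = s^T *m B by have := congr1 trmx e1; rewrite !trmx_mul trmxK hBsym.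
by rewrite -mulmxA -e2 mulKmx.
Qed.

Lemma ddagK : involutive ddag.
Proof.
move=> s; rewrite !ddagE !trmx_mul trmxK hBsym trmx_inv hBsym !mulmxA mulVmx // mul1mx.
by rewrite mulmxKV.
Qed.

Lemma dagger_basis_order P : P \in unitmx ->
  dagger_set ddag (basis_order v P) = basis_order v (invmx (P^T *m B)).
Proof.
move=> uP; have conjE s : invmx P *m ddag s *m P =
    (invmx (invmx (P^T *m B)) *m s *m invmx (P^T *m B))^T.
  by rewrite invmxK ddagE !trmx_mul !trmx_inv !trmx_mul trmxK hBsym invmxM ?unitmx_tr // !mulmxA.
apply: seteqP => s; split => [[t tP ->] | sQ].
  by rewrite /basis_order -inPmx_tr -conjE ddagK.
by exists (ddag s); rewrite ?ddagK // /basis_order conjE inPmx_tr.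
Qed.

Lemma EndInter_basis_lattice P : P \in unitmx ->
  EndInter v B (basis_lattice v P) =
  (fun s => basis_order v P s /\ basis_order v (invmx (P^T *m B)) s).
Proof.
move=> uP; rewrite /EndInter dual_basis_lattice // !EndL_basis_lattice //.
by rewrite unitmx_inv unitmx_mul unitmx_tr uP.
Qed.

End Duality.

Theorem lemma5p3 (F : fieldType) (v : F -> int)
  (hF : nonarch_local_field v) (hchar : (2%:R : F) != 0)
  (B : 'M[F]_2) (hBsym : B^T = B) (hBnd : B \in unitmx)
  (ddag : 'M[F]_2 -> 'M[F]_2)
  (hdag : forall (s : 'M[F]_2) (x y : 'cV[F]_2),
            bform B x (s *m y) = bform B (ddag s *m x) y) :
  (forall L, olattice v L -> is_order v (EndInter v B L)) /\
  (forall L (c : F), olattice v L -> c != 0 ->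
     seteq (EndInter v B (scale_lattice c L)) (EndInter v B L)) /\
  (forall O' : 'M[F]_2 -> Prop,
     (exists L, olattice v L /\ seteq O' (EndInter v B L)) <->
     (exists O, max_order v O /\ seteq O' (fun x => O x /\ dagger_set ddag O x))).
Proof.
have uQ P : P \in unitmx -> invmx (P^T *m B) \in unitmx.
  by move=> uP; rewrite unitmx_inv unitmx_mul unitmx_tr uP.
split; [|split].
- move=> _ /(olattice_basis hF) [P uP ->]; rewrite (EndInter_basis_lattice hF hBsym hBnd) //.
  by apply: (is_orderI hF); apply: (basis_order_is_order hF); rewrite ?uQ.
- by move=> L c _ nc s; rewrite EndInter_scale.
move=> O'; split.
- case=> _ [/(olattice_basis hF) [P uP ->] /seteqP ->].
  exists (basis_order v P); split; first exact: (basis_order_max hF).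
  by rewrite (dagger_basis_order v hBsym hBnd hdag) // (EndInter_basis_lattice hF hBsym hBnd).
- case=> _ [/(max_order_basis hF) [P uP ->] /seteqP ->].
  exists (basis_lattice v P); split; first exact: (basis_lattice_olattice hF).
  by rewrite (dagger_basis_order v hBsym hBnd hdag) // (EndInter_basis_lattice hF hBsym hBnd).
Qed.
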